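(* Let $k$ be a field, $E$ a $k$-vector space of dimension $n$, and $f\in\operatorname{End}_k(E)$ an endomorphism with annihilating (minimal) polynomial $x^n$. Let $e\in E$ be a vector with $f^{n-1}(e)\neq 0$. Then the generalized inverses $g\in\operatorname{End}_k(E)$ of $f$ are exactly the linear maps determined by $$g(f^i(e))=\begin{cases} f^{i-1}(e)+\lambda_i f^{n-1}(e) & \text{if } 1\le i\le n-1,\\ \sum_{h=0}^{n-1}\alpha_h f^h(e) & \text{if } i=0,\end{cases}$$ where $\lambda_1,\dots,\lambda_{n-1},\alpha_0,\dots,\alpha_{n-1}\in k$ are arbitrary scalars.
   Context: A generalized inverse of an endomorphism $f$ of $E$ is an endomorphism $g$ of $E$ with $f\circ g\circ f=f$. *)

From HB Require Import structures.
From mathcomp Require Import all_boot all_order all_algebra.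
Set Implicit Arguments. Unset Strict Implicit. Unset Printing Implicit Defensive.
Import GRing.Theory.
Local Open Scope ring_scope.

Definition lfpow (k : fieldType) (E : vectType k) (f : 'End(E)) (i : nat) : 'End(E) :=
  iter i (fun h => (f \o h)%VF) \1%VF.

Definition eval_end (k : fieldType) (E : vectType k) (p : {poly k}) (f : 'End(E)) : 'End(E) :=
  \sum_(i < size p) p`_i *: lfpow f i.

Definition is_minpoly (k : fieldType) (E : vectType k) (f : 'End(E)) (p : {poly k}) : Prop :=
  [/\ p \is monic, eval_end p f = 0 &
      forall q : {poly k}, q != 0 -> eval_end q f = 0 -> (size p <= size q)%N].

Definition gen_inverse (k : fieldType) (E : vectType k) (f g : 'End(E)) : Prop :=
  (f \o g \o f)%VF = f.

From HB Require Import structures.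
From mathcomp Require Import all_boot all_order all_algebra.
From mathcomp Require Import zify.
Set Implicit Arguments. Unset Strict Implicit. Unset Printing Implicit Defensive.
Import GRing.Theory.
Local Open Scope ring_scope.

(* Since f^n = 0 and f^(n-1) e != 0, the vectors e, f e, ..., f^(n-1) e form
   a basis of E in which f is the nilpotent shift; its kernel is the line
   spanned by f^(n-1) e.  Testing f g f = f on this basis, g is a generalized
   inverse iff f (g (f^i e)) = f^i e for 1 <= i <= n-1, i.e. iff each
   g (f^i e) - f^(i-1) e lies in ker f, while g e is unconstrained. *)

Section Iterates.
Variables (k : fieldType) (E : vectType k) (f : 'End(E)).

Lemma lfpow0 x : lfpow f 0 x = x.
Proof. by rewrite /lfpow /= id_lfunE. Qed.

Lemma lfpowS i x : lfpow f i.+1 x = f (lfpow f i x).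
Proof. by rewrite /lfpow iterS comp_lfunE. Qed.

Lemma lfpowD i j x : lfpow f (i + j) x = lfpow f i (lfpow f j x).
Proof. by elim: i => [|i IHi]; rewrite ?lfpow0 // addSn !lfpowS IHi. Qed.

Lemma eval_end_Xn n : eval_end 'X^n f = lfpow f n.
Proof.
rewrite /eval_end size_polyXn big_ord_recr /= coefXn eqxx scale1r big1 ?add0r //.
by move=> i _; rewrite coefXn (ltn_eqF (ltn_ord i)) scale0r.
Qed.

Lemma gen_inverseP (g : 'End(E)) : gen_inverse f g <-> forall x, f (g (f x)) = f x.
Proof.
split=> [fgf x | fgf]; last by apply/lfunP => x; rewrite !comp_lfunE fgf.
by have /lfunP/(_ x) := fgf; rewrite !comp_lfunE.
Qed.

End Iterates.

Definition krylov (k : fieldType) (E : vectType k) (f : 'End(E)) (e : E) (n : nat)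
  : n.-tuple E := [tuple lfpow f i e | i < n].

Section CyclicNilpotent.
Variables (k : fieldType) (E : vectType k) (f : 'End(E)) (m : nat) (e : E).
Hypotheses (fSm_e : lfpow f m.+1 e = 0) (fm_e : lfpow f m e != 0).

Let K := krylov f e m.+1.

Lemma lfpow_eq0_gt i : (m < i)%N -> lfpow f i e = 0.
Proof. by move=> lt_mi; rewrite -(subnK lt_mi) lfpowD fSm_e linear0. Qed.

Lemma krylov_coef_eq0 (c : nat -> k) i :
  (i <= m)%N -> \sum_(j < m.+1) c j *: lfpow f j e = 0 -> c i = 0.
Proof.
move=> + sum0; elim/ltn_ind: i => i IHi le_im.
(* f^(m-i) kills the terms of index > i and sends the i-th one to f^m e. *)
have := congr1 (lfpow f (m - i)) sum0.
rewrite linear_sum linear0 (bigD1 (Ordinal (le_im : (i < m.+1)%N))) //= big1.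
  rewrite addr0 linearZ /= -lfpowD subnK // => /eqP.
  by rewrite scaler_eq0 (negPf fm_e) orbF => /eqP.
move=> j ne_ji; rewrite linearZ /= -lfpowD.
have le_jm : (j <= m)%N by rewrite -ltnS.
case: (ltngtP (j : nat) i) => [lt_ji | lt_ij | eq_ji].
- by rewrite IHi ?scale0r.
- by rewrite lfpow_eq0_gt ?scaler0 //; lia.
- by case/eqP: ne_ji; apply: val_inj.
Qed.

Lemma free_krylov : free K.
Proof.
apply/freeP => c; rewrite /K /krylov.
under eq_bigr do rewrite -tnth_nth tnth_mktuple.
move=> sum0 i; rewrite -(inord_val i).
apply: (krylov_coef_eq0 (c := fun j => c (inord j))); first by rewrite -ltnS.
by under eq_bigr do rewrite inord_val.
Qed.

Hypothesis dimE : \dim (fullv : {vspace E}) = m.+1.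

Lemma krylov_decomp v : v = \sum_(i < m.+1) coord K i v *: lfpow f i e.
Proof.
have spanK : <<K>>%VS = fullv.
  by apply/eqP; rewrite eqEdim subvf dimE (eqP free_krylov) size_tuple /=.
have vK : v \in <<K>>%VS by rewrite spanK memvf.
rewrite {1}(coord_span vK); apply: eq_bigr => i _.
by rewrite -tnth_nth tnth_mktuple.
Qed.

Lemma ker_last_krylov w : f w = 0 -> w = coord K ord_max w *: lfpow f m e.
Proof.
set c := fun i => coord K (inord i) w.
have decw : w = \sum_(i < m.+1) c i *: lfpow f i e.
  by rewrite {1}(krylov_decomp w); apply: eq_bigr => i _; rewrite /c inord_val.
rewrite {1}decw linear_sum big_ord_recr /= linearZ /= -lfpowS fSm_e scaler0 addr0.
move=> shifted0.
(* f w is the combination with coefficients shifted by one, so c i = 0 for i < m. *)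
have c0 i : (i < m)%N -> c i = 0.
  move=> lt_im.
  apply: (krylov_coef_eq0 (c := fun j => if j is j'.+1 then c j' else 0) (i := i.+1) lt_im).
  rewrite big_ord_recl scale0r add0r -[RHS]shifted0.
  by apply: eq_bigr => j _; rewrite linearZ /= -lfpowS.
rewrite {1}decw big_ord_recr /= big1 ?add0r => [|i _]; last by rewrite c0 ?scale0r.
by congr (_ *: _); rewrite /c; congr (coord _ _ _); apply: val_inj; rewrite /= inordK.
Qed.

Lemma gen_inverse_krylov (g : 'End(E)) :
  (forall i, (i < m)%N -> f (g (lfpow f i.+1 e)) = lfpow f i.+1 e) ->
  gen_inverse f g.
Proof.
move=> fgf; apply/lfunP => v; rewrite !comp_lfunE (krylov_decomp v) !linear_sum.
apply: eq_bigr => j _; rewrite !linearZ /= -!lfpowS; congr (_ *: _).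
have [lt_jm | le_mj] := ltnP j m; first exact: fgf.
by rewrite lfpow_eq0_gt ?ltnS // !linear0.
Qed.

End CyclicNilpotent.

Theorem corollary3p8 (k : fieldType) (E : vectType k) (n : nat)
    (hdim : \dim (fullv : {vspace E}) = n)
    (f : 'End(E)) (hmin : is_minpoly f 'X^n)
    (e : E) (he : lfpow f n.-1 e != 0) :
  forall g : 'End(E),
    gen_inverse f g <->
    exists (lam : nat -> k) (alpha : nat -> k),
      g e = \sum_(h < n) alpha h *: lfpow f h e /\
      (forall i : nat, (1 <= i <= n.-1)%N ->
         g (lfpow f i e) = lfpow f i.-1 e + lam i *: lfpow f n.-1 e).
Proof.
case: n hdim hmin he => [|m] hdim [_ fn0 _] he g.
  have /eqP E0 : (fullv : {vspace E}) == 0%VS by rewrite -dimv_eq0 hdim.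
  by move: he; rewrite lfpow0 -memv0 -E0 memvf.
have fSm_e : lfpow f m.+1 e = 0 by rewrite -eval_end_Xn fn0 lfunE.
set K := krylov f e m.+1.
split=> [/gen_inverseP fgf | [lam [alpha [_ g_shift]]]].
  exists (fun i => coord K ord_max (g (lfpow f i e) - lfpow f i.-1 e)).
  exists (fun h => coord K (inord h) (g e)); split.
    rewrite {1}(krylov_decomp fSm_e he hdim (g e)).
    by apply: eq_bigr => h _; rewrite inord_val.
  case=> // i _; rewrite /= addrC -ker_last_krylov ?subrK //.
  by rewrite raddfB /= lfpowS fgf -lfpowS subrr.
apply: (gen_inverse_krylov fSm_e he hdim) => i lt_im.
by rewrite g_shift //= linearD linearZ /= -!lfpowS fSm_e scaler0 addr0.
Qed.
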